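(* Let $c_2,c_3$ be constants and $\mu(t)=t^2+c_2t+c_3$. Let $\{P_n\}_{n\ge0}$ be a sequence of monic orthogonal polynomials in the lattice $\mu(t)$ with three-term recurrence relation $\mu(t)P_n=P_{n+1}+\beta_nP_n+\gamma_nP_{n-1}$ ($P_{-1}=0$, $P_0=1$, $\gamma_n\ne0$). Let $L$ be the infinite tridiagonal matrix with $L_{n,n}=\beta_n$, $L_{n,n+1}=1$, $L_{n,n-1}=\gamma_n$, and let $M$ be the infinite tridiagonal matrix with $M_{n,n}=\beta'_n$, $M_{n,n+1}=1$, $M_{n,n-1}=\gamma'_n$, where $\beta'_n,\gamma'_n$ are the three-term recurrence coefficients of the sequence of divided differences, $\mu(t)Q_n=Q_{n+1}+\beta'_nQ_n+\gamma'_nQ_{n-1}$ with $Q_n=P'_{n+1}$. Let $D$ be the infinite matrix with $D_{n+1,n}=n+1$ ($n\ge0$) and all other entries zero. Then $\{P_n\}$ is a sequence of classical orthogonal polynomials on the quadratic lattice $\mu(t)$ if and only if $$L^2D-2LDM+DM^2-\frac12\,(LD+DM)+\Big(c_3+\frac1{16}-\frac{c_2^2}{4}\Big)D=0 .$$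
   Context: The divided-difference operator is $\mathbb{D}f(t)=\frac{f(t+1/2)-f(t-1/2)}{\mu(t+1/2)-\mu(t-1/2)}$; it maps polynomials of degree $n$ in $\mu(t)$ to polynomials of degree $n-1$ in $\mu(t)$. A sequence of monic polynomials $\{R_n\}$ in $\mu(t)$ ($\deg R_n=n$) is orthogonal if it satisfies $\mu(t)R_n=R_{n+1}+b_nR_n+c_nR_{n-1}$, $R_{-1}=0$, $R_0=1$, with $c_n\neq0$. Set $P'_n=\frac1n\mathbb{D}P_n$ for $n\ge1$. The sequence $\{P_n\}$ is called classical if $\{P'_n\}_{n\ge1}$ is also a sequence of monic orthogonal polynomials in $\mu(t)$. Indices of infinite matrices start at $0$; products of these banded infinite matrices are well defined. *)

From HB Require Import structures.
From mathcomp Require Import all_boot all_order all_algebra.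
Set Implicit Arguments. Unset Strict Implicit. Unset Printing Implicit Defensive.
Import Order.TTheory GRing.Theory Num.Theory.
Local Open Scope ring_scope.

Section Defs.
Variable R : numFieldType.

(* Polynomials "in mu(t)" are represented by polynomials p in a variable x;
   the actual function of t is p \Po mu, where mu is the polynomial in t
   below. *)
Definition mu (c2 c3 : R) : {poly R} := 'X^2 + c2 *: 'X + c3%:P.

Definition tshift (a : R) (f : {poly R}) : {poly R} := f \Po ('X + a%:P).

(* DDrel c2 c3 p q  <->  DD (p(mu(t))) = q(mu(t)), where
   DD f(t) = (f(t+1/2) - f(t-1/2)) / (mu(t+1/2) - mu(t-1/2)),
   written without division (the denominator 2t + c2 is a nonzero polynomial). *)
Definition DDrel (c2 c3 : R) (p q : {poly R}) : Prop :=
  (q \Po mu c2 c3) * (tshift (1/2) (mu c2 c3) - tshift (-(1/2)) (mu c2 c3))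
  = tshift (1/2) (p \Po mu c2 c3) - tshift (-(1/2)) (p \Po mu c2 c3).

Definition prev (p : nat -> {poly R}) (n : nat) : {poly R} :=
  if n is m.+1 then p m else 0.

Definition ttrr (p : nat -> {poly R}) (b c : nat -> R) : Prop :=
  forall n, 'X * p n = p n.+1 + b n *: p n + c n *: prev p n.

Definition monic_orth_with (p : nat -> {poly R}) (b c : nat -> R) : Prop :=
  [/\ p 0 = 1, (forall n, p n \is monic /\ size (p n) = n.+1),
      ttrr p b c & (forall n, (0 < n)%N -> c n != 0)].

Definition monic_orth (p : nat -> {poly R}) : Prop :=
  exists b c, monic_orth_with p b c.

(* {P_n} is classical: the sequence Q_n = P'_{n+1} = (1/(n+1)) DD P_{n+1}
   (n >= 0) is again monic orthogonal. *)
Definition classical (c2 c3 : R) (P : nat -> {poly R}) : Prop :=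
  exists Q : nat -> {poly R},
    (forall n, DDrel c2 c3 (P n.+1) (n.+1%:R *: Q n)) /\ monic_orth Q.

Definition imat := nat -> nat -> R.

(* Product of infinite matrices A * B, for a left factor A with
   A i k = 0 whenever k > i + 2 (upper bandwidth <= 2); then the sum
   \sum_k A i k * B k j is finite and equals the sum below.  All the left
   factors used in the theorem (L, L*L, L*D, D, D*M) have this property. *)
Definition imul (A B : imat) : imat :=
  fun i j => \sum_(k < i.+3) A i k * B k j.

Definition iadd (A B : imat) : imat := fun i j => A i j + B i j.
Definition iscale (a : R) (A : imat) : imat := fun i j => a * A i j.

Definition jacobi (b c : nat -> R) : imat :=
  fun i j => if j == i then b i else if j == i.+1 then 1
             else if i == j.+1 then c i else 0.

Definition Dmat : imat := fun i j => if i == j.+1 then i%:R else 0.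

Definition main_expr (c2 c3 : R) (L M : imat) : imat :=
  iadd (imul (imul L L) Dmat)
  (iadd (iscale (-2) (imul (imul L Dmat) M))
  (iadd (imul (imul Dmat M) M)
  (iadd (iscale (-(1/2)) (iadd (imul L Dmat) (imul Dmat M)))
        (iscale (c3 + 1/16 - c2^+2/4) Dmat)))).

End Defs.

From Pilot Require Import Defs.
From HB Require Import structures.
From mathcomp Require Import all_boot all_order all_algebra.
From mathcomp Require Import ring zify.
Import Order.TTheory GRing.Theory Num.Theory.
Local Open Scope ring_scope.
Set Implicit Arguments. Unset Strict Implicit. Unset Printing Implicit Defensive.

(* Let E be the left-hand side of the identity.  Write q = (Q_k(mu(t)))_k and
   p+, p- for (P_k(mu(t + 1/2)))_k and (P_k(mu(t - 1/2)))_k, columns of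
   polynomials in t on which the banded matrices act.  The recurrences say
   that M acts on q as multiplication by mu(t), and L acts on p+ and p- as
   multiplication by mu(t + 1/2) and mu(t - 1/2); the divided-difference
   relation says (mu(t + 1/2) - mu(t - 1/2)) D q = p+ - p-.  Hence
     (mu(t + 1/2) - mu(t - 1/2)) E q = s(mu(t + 1/2)) p+ - s(mu(t - 1/2)) p-,
   where s(x) = (x - mu)^2 - (x + mu)/2 + c3 + 1/16 - c2^2/4 is the symbol of
   E, and s vanishes at both mu(t + 1/2) and mu(t - 1/2).  So E q = 0, and as
   E is banded and deg Q_k = k, E = 0: the matrix identity holds as soon as Q
   satisfies some three-term recurrence.  Conversely the entry
     E_{n+3,n} = (n+1) gamma_{n+3} gamma_{n+2} - 2 (n+2) gamma_{n+3} gamma'_{n+1}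
                 + (n+3) gamma'_{n+2} gamma'_{n+1}
   forces gamma'_{n+1} <> 0, which is all that is missing for Q to be monic
   orthogonal. *)

Section BandedMatrices.
Variable R : numFieldType.
Implicit Types (A B L M : imat R) (v w : nat -> {poly R}).

(* Like [imul], [iapply A v] truncates row sums to [k < i.+3]; it is the
   true product of [A] with the column [v] when [A] has upper bandwidth <= 2. *)
Definition iapply A v i : {poly R} := \sum_(k < i.+3) (A i k)%:P * v k.

Definition ubanded A a := forall i k, (i + a < k)%N -> A i k = 0.

Lemma ubanded_le A a b : (a <= b)%N -> ubanded A a -> ubanded A b.
Proof. by move=> ab bA i k ?; rewrite bA //; lia. Qed.

Lemma ubanded_add A B a : ubanded A a -> ubanded B a -> ubanded (iadd A B) a.
Proof. by move=> bA bB i k ?; rewrite /iadd bA ?bB ?addr0. Qed.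

Lemma ubanded_scale c A a : ubanded A a -> ubanded (iscale c A) a.
Proof. by move=> bA i k ?; rewrite /iscale bA ?mulr0. Qed.

Lemma ubanded_mul A B a b : ubanded A a -> ubanded B b -> ubanded (imul A B) (a + b).
Proof.
move=> bA bB i j ij; rewrite /imul big1 // => k _.
have [ik|ki] := ltnP (i + a) k; first by rewrite bA // mul0r.
by rewrite bB ?mulr0 //; lia.
Qed.

Lemma ubanded_jacobi b c : ubanded (jacobi b c) 1.
Proof.
move=> i k ik; rewrite /jacobi.
case: eqP => [?|_]; first lia. case: eqP => [?|_]; first lia.
by case: eqP => [?|_] //; lia.
Qed.

Lemma ubanded_Dmat : ubanded (Dmat R) 0.
Proof. by move=> i k ik; rewrite /Dmat; case: eqP => [?|_] //; lia. Qed.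

Lemma iapply_ext A v w : v =1 w -> iapply A v =1 iapply A w.
Proof. by move=> vw i; apply: eq_bigr => k _; rewrite vw. Qed.

Lemma iapply_add A B v i : iapply (iadd A B) v i = iapply A v i + iapply B v i.
Proof. by rewrite /iapply -big_split; apply: eq_bigr => k _; rewrite polyCD mulrDl. Qed.

Lemma iapply_scale c A v i : iapply (iscale c A) v i = c%:P * iapply A v i.
Proof. by rewrite /iapply mulr_sumr; apply: eq_bigr => k _; rewrite polyCM mulrA. Qed.

Lemma iapply_mulr A r v i : iapply A (fun k => r * v k) i = r * iapply A v i.
Proof. by rewrite /iapply mulr_sumr; apply: eq_bigr => k _; rewrite mulrCA. Qed.

Lemma iapply_sub A v w i :
  iapply A (fun k => v k - w k) i = iapply A v i - iapply A w i.
Proof. by rewrite /iapply -sumrB; apply: eq_bigr => k _; rewrite mulrBr. Qed.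

Lemma sum_ord_trunc (F : nat -> {poly R}) m n :
  (forall j, (m <= j)%N -> F j = 0) -> (m <= n)%N ->
  \sum_(j < n) F j = \sum_(j < m) F j.
Proof.
move=> F0 mn; rewrite (big_ord_widen n F mn) [RHS]big_mkcond /=.
by apply: eq_bigr => j _; case: ltnP => // /F0.
Qed.

Lemma iapply_mul A B a b :
  ubanded A a -> ubanded B b -> (a + b <= 2)%N ->
  forall v, iapply (imul A B) v =1 iapply A (iapply B v).
Proof.
move=> bA bB ab v i; rewrite /iapply /imul.
under eq_bigr => j _ do rewrite rmorph_sum mulr_suml.
rewrite exchange_big /=; apply: eq_bigr => k _.
under eq_bigr => j _ do rewrite polyCM -mulrA.
rewrite -mulr_sumr.
have [ik|ki] := ltnP (i + a) k; first by rewrite bA // polyC0 !mul0r.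
have Bv0 j : ((k + b).+1 <= j)%N -> (B k j)%:P * v j = 0.
  by move=> kj; rewrite bB ?polyC0 ?mul0r //; lia.
congr (_ * _); rewrite (sum_ord_trunc Bv0); last lia.
by rewrite [RHS](sum_ord_trunc Bv0) //; lia.
Qed.

Lemma iapply_delta A i j :
  (j < i.+3)%N -> iapply A (fun k => (k == j)%:R) i = (A i j)%:P.
Proof.
move=> ji; rewrite /iapply.
under eq_bigr => k _ do rewrite mulr_natr mulrb.
by rewrite -big_mkcond (big_ord1_eq _ (fun k => (A i k)%:P)) ji.
Qed.

Lemma iapply_jacobi b c v i :
  iapply (jacobi b c) v i = v i.+1 + (b i)%:P * v i + (c i)%:P * Defs.prev v i.
Proof.
rewrite /iapply.
have split_entry k : (jacobi b c i k)%:P * v k =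
    (if k == i.+1 then v k else 0) + (if k == i then (b i)%:P * v k else 0)
    + (if i == k.+1 then (c i)%:P * v k else 0).
  rewrite /jacobi; case: eqP => h1; case: eqP => h2; case: eqP => h3;
  rewrite ?polyC0 ?polyC1 ?mul0r ?mul1r ?add0r ?addr0 //; lia.
under eq_bigr => k _ do rewrite split_entry.
rewrite !big_split /= -!big_mkcond /= big_ord1_eq.
rewrite (big_ord1_eq _ (fun j => (b i)%:P * v j)) !ltnS leqnSn ltnW ?leqnSn //.
congr (_ + _); case: i {split_entry} => [|i] /=; first by rewrite big_pred0 ?mulr0.
rewrite (eq_bigl (fun k : 'I_ _ => k == i :> nat)) => [|k /=]; last first.
  by rewrite eqSS eq_sym.
by rewrite (big_ord1_eq _ (fun j => (c i.+1)%:P * v j)) ifT //; lia.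
Qed.

Lemma iapply_Dmat v i : iapply (Dmat R) v i = i%:R * Defs.prev v i.
Proof.
rewrite /iapply /Dmat.
under eq_bigr => k _ do rewrite (fun_if (fun x => x%:P)) polyC0
   (fun_if (fun x => x * v k)) mul0r.
rewrite -big_mkcond /=; case: i => [|i] /=; first by rewrite big_pred0 ?mulr0.
rewrite (eq_bigl (fun k : 'I_ _ => k == i :> nat)) => [|k /=]; last first.
  by rewrite eqSS eq_sym.
by rewrite (big_ord1_eq _ (fun j => i.+1%:R%:P * v j)) ifT ?polyC_natr //; lia.
Qed.

End BandedMatrices.

Section MainExpression.
Variables (R : numFieldType) (c2 c3 : R).
Implicit Types (L M : imat R) (v w : nat -> {poly R}) (x y : {poly R}).

(* The symbol of [main_expr]: [L], [M], [D] replaced by [x], [y], [1]. *)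
Definition main_symbol x y : {poly R} :=
  x ^+ 2 + (-2)%:P * (x * y) + y ^+ 2 + (-(1/2))%:P * (x + y)
  + (c3 + 1/16 - c2 ^+ 2 / 4)%:P.

Lemma ubanded_main_expr L M :
  ubanded L 1 -> ubanded M 1 -> ubanded (main_expr c2 c3 L M) 2.
Proof.
move=> bL bM; have bD := @ubanded_Dmat R.
have bLD := ubanded_mul bL bD; have bDM := ubanded_mul bD bM.
apply: ubanded_add; first exact: ubanded_mul (ubanded_mul bL bL) bD.
apply: ubanded_add; first exact/ubanded_scale/(ubanded_mul bLD bM).
apply: ubanded_add; first exact: ubanded_mul bDM bM.
apply: ubanded_add; last exact/ubanded_scale/(ubanded_le _ bD).
by apply/ubanded_scale/ubanded_add; [exact: ubanded_le _ bLD | exact: ubanded_le _ bDM].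
Qed.

Lemma iapply_main_expr L M v n :
  ubanded L 1 -> ubanded M 1 ->
  iapply (main_expr c2 c3 L M) v n =
    iapply L (iapply L (iapply (Dmat R) v)) n
  + (-2)%:P * iapply L (iapply (Dmat R) (iapply M v)) n
  + iapply (Dmat R) (iapply M (iapply M v)) n
  + (-(1/2))%:P * (iapply L (iapply (Dmat R) v) n + iapply (Dmat R) (iapply M v) n)
  + (c3 + 1/16 - c2 ^+ 2 / 4)%:P * iapply (Dmat R) v n.
Proof.
move=> bL bM; have bD := @ubanded_Dmat R.
rewrite /main_expr !(iapply_add, iapply_scale).
rewrite (iapply_mul (ubanded_mul bL bL) bD) // (iapply_mul bL bL) //.
rewrite (iapply_mul (ubanded_mul bL bD) bM) // (iapply_mul bL bD) //.
rewrite (iapply_mul (ubanded_mul bD bM) bM) // (iapply_mul bD bM) //.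
by rewrite (iapply_mul bL bD) // (iapply_mul bD bM) // !addrA.
Qed.

Lemma main_expr_on_eigen L M v y d w1 x1 w2 x2 n :
  ubanded L 1 -> ubanded M 1 ->
  iapply M v =1 (fun k => y * v k) ->
  iapply L w1 =1 (fun k => x1 * w1 k) ->
  iapply L w2 =1 (fun k => x2 * w2 k) ->
  (forall k, d * iapply (Dmat R) v k = w1 k - w2 k) ->
  d * iapply (main_expr c2 c3 L M) v n
  = main_symbol x1 y * w1 n - main_symbol x2 y * w2 n.
Proof.
move=> bL bM Mv Lw1 Lw2 dDv; set u := iapply (Dmat R) v.
have DMv : iapply (Dmat R) (iapply M v) =1 (fun k => y * u k).
  by move=> k; rewrite (iapply_ext _ Mv) iapply_mulr.
have MMv : iapply M (iapply M v) =1 (fun k => y * (y * v k)).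
  by move=> k; rewrite (iapply_ext _ Mv) iapply_mulr Mv.
have DMMv : iapply (Dmat R) (iapply M (iapply M v)) =1 (fun k => y * (y * u k)).
  by move=> k; rewrite (iapply_ext _ MMv) !iapply_mulr.
have dLu k : d * iapply L u k = x1 * w1 k - x2 * w2 k.
  by rewrite -iapply_mulr (iapply_ext _ dDv) iapply_sub Lw1 Lw2.
have dLLu : d * iapply L (iapply L u) n = x1 * (x1 * w1 n) - x2 * (x2 * w2 n).
  by rewrite -iapply_mulr (iapply_ext _ dLu) iapply_sub !iapply_mulr Lw1 Lw2.
have dLDMv : d * iapply L (iapply (Dmat R) (iapply M v)) n
    = y * (x1 * w1 n - x2 * w2 n).
  by rewrite (iapply_ext _ DMv) iapply_mulr mulrCA dLu.
rewrite iapply_main_expr // DMMv DMv !(mulrDr, mulrCA d).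
by rewrite dLLu dLDMv dLu dDv /main_symbol; ring.
Qed.

Lemma main_expr_subdiag b g b' g' m :
  main_expr c2 c3 (jacobi b g) (jacobi b' g') m.+3 m =
  m.+1%:R * g m.+3 * g m.+2 - 2 * m.+2%:R * g m.+3 * g' m.+1
  + m.+3%:R * g' m.+2 * g' m.+1.
Proof.
apply: (@polyC_inj R); rewrite -iapply_delta; last lia.
rewrite iapply_main_expr; try exact: ubanded_jacobi.
do 3 rewrite ?(iapply_jacobi, iapply_Dmat) /=.
rewrite eqxx !gtn_eqF; try lia.
rewrite /= -!polyC_natr; ring.
Qed.

End MainExpression.

Section RecurrentSequences.
Variable R : numFieldType.
Implicit Types (p : nat -> {poly R}) (b c : nat -> R).

Lemma ttrr_comp p b c r :
  ttrr p b c -> iapply (jacobi b c) (fun k => p k \Po r) =1 (fun k => r * (p k \Po r)).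
Proof.
move=> rec k; rewrite iapply_jacobi.
have := congr1 (comp_poly r) (rec k); rewrite /= comp_polyM comp_polyX => ->.
rewrite !comp_polyD !comp_polyZ -!mul_polyC.
by case: k {rec} => [|k] //=; rewrite comp_poly0.
Qed.

Lemma monicX_mul_sub (p q : {poly R}) n :
  p \is monic -> size p = n.+1 -> (size q <= n.+1)%N ->
  'X * p - q \is monic /\ size ('X * p - q) = n.+2.
Proof.
move=> mp sp sq.
have sXp : size ('X * p) = n.+2 by rewrite mulrC size_mulX ?monic_neq0 // sp.
have lt : (size (- q) < size ('X * p)%R)%N by rewrite size_polyN sXp ltnS.
split; last by rewrite size_polyDl.
by rewrite monicE lead_coefDl // -monicE monicMl // monicX.
Qed.

Lemma ttrr_monic p b c :
  p 0 = 1 -> ttrr p b c -> forall n, p n \is monic /\ size (p n) = n.+1.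
Proof.
move=> p0 rec.
suff inv n : (p n \is monic /\ size (p n) = n.+1) /\ (size (Defs.prev p n) <= n)%N.
  by move=> n; case: (inv n).
elim: n => [|n [[mp sp] sprev]]; first by rewrite p0 monic1 size_poly1 size_poly0.
split; last by rewrite /= sp.
have -> : p n.+1 = 'X * p n - (b n *: p n + c n *: Defs.prev p n).
  by rewrite rec; ring.
apply: monicX_mul_sub => //; apply: leq_trans (size_polyD _ _) _.
by rewrite geq_max !(leq_trans (size_scale_leq _ _)) ?sp // ltnW.
Qed.

Lemma size_graded_sum p (a : nat -> R) N :
  (forall k, size (p k) = k.+1) -> (size (\sum_(k < N) a k *: p k)%R <= N)%N.
Proof.
move=> sp; elim: N => [|N IH]; first by rewrite big_ord0 size_poly0.
rewrite big_ord_recr /=; apply: leq_trans (size_polyD _ _) _.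
by rewrite geq_max (leq_trans IH) // (leq_trans (size_scale_leq _ _)) ?sp.
Qed.

Lemma graded_sum_eq0 p (a : nat -> R) N :
  (forall k, size (p k) = k.+1) ->
  \sum_(k < N) a k *: p k = 0 -> forall k, (k < N)%N -> a k = 0.
Proof.
move=> sp; elim: N => [//|N IH]; rewrite big_ord_recr /= => sum0.
have aN : a N = 0.
  apply/eqP/negPn/negP => aN.
  have : size (\sum_(k < N) a k *: p k + a N *: p N) = N.+1.
    by rewrite addrC size_polyDl size_scale // sp ltnS size_graded_sum.
  by rewrite sum0 size_poly0.
move: sum0; rewrite aN scale0r addr0 => /IH aK k; rewrite ltnS leq_eqVlt.
by case/orP => [/eqP -> //|]; exact: aK.
Qed.

End RecurrentSequences.

Section QuadraticLattice.
Variables (R : numFieldType) (c2 c3 : R).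
Local Notation mu := (mu c2 c3).

Lemma size_mu : size mu = 3.
Proof.
rewrite /mu -addrA size_polyDl size_polyXn //.
apply: leq_ltn_trans (size_polyD _ _) _; rewrite gtn_max.
apply/andP; split; last by apply: leq_ltn_trans (size_polyC_leq1 _) _.
by apply: leq_ltn_trans (size_scale_leq _ _) _; rewrite size_polyX.
Qed.

Lemma comp_mu_inj : injective (comp_poly mu).
Proof.
move=> p1 p2 /eqP; rewrite -subr_eq0 -comp_polyB comp_poly_eq0 ?size_mu //.
by rewrite subr_eq0 => /eqP.
Qed.

Lemma tshift_comp a (p r : {poly R}) : tshift a (p \Po r) = p \Po tshift a r.
Proof. by rewrite /tshift comp_polyA. Qed.

Lemma tshift_mu a :
  tshift a mu = ('X + a%:P) ^+ 2 + c2%:P * ('X + a%:P) + c3%:P.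
Proof.
rewrite /tshift /mu !comp_polyD comp_polyZ comp_Xn_poly comp_polyX comp_polyC.
by rewrite mul_polyC.
Qed.

Lemma mul2_polyC_half : 2 * (1/2 : R)%:P = 1.
Proof. by rewrite -polyC_natr -polyCM div1r mulfV ?polyC1 ?pnatr_eq0. Qed.

Lemma mu_shift_diff_neq0 : tshift (1/2) mu - tshift (-(1/2)) mu != 0.
Proof.
have -> : tshift (1/2) mu - tshift (-(1/2)) mu = 'X *+ 2 + c2%:P.
  rewrite !tshift_mu polyCN -[RHS]mul1r -mul2_polyC_half; ring.
apply/eqP => /(congr1 (fun p : {poly R} => p`_1)).
by rewrite coefD coefMn coefX coefC coef0 /= addr0 => /eqP; rewrite pnatr_eq0.
Qed.

Lemma main_symbol_shift_mu a :
  a ^+ 2 = (1/2) ^+ 2 -> main_symbol c2 c3 (tshift a mu) mu = 0.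
Proof.
move=> a2; set h : {poly R} := (1/2 : R)%:P; set A := a%:P.
have hA : A ^+ 2 = h ^+ 2 by rewrite -!rmorphXn a2.
have K : (c3 + 1/16 - c2 ^+ 2 / 4)%:P = c3%:P + h ^+ 4 - c2%:P ^+ 2 * h ^+ 2.
  rewrite -!rmorphXn -rmorphM -rmorphD -rmorphB; congr _%:P.
  by field; rewrite ?pnatr_eq0.
rewrite /main_symbol tshift_mu /mu -mul_polyC polyCN K -/h -/A.
set X : {poly R} := 'X; set C2 := c2%:P; set C3 := c3%:P.
(* cofactors of the relations [2 h = 1] and [A ^+ 2 = h ^+ 2] *)
apply: (etrans (y := (2 * h - 1) * (2 * h * X ^+ 2 + 2 * h * C2 * X + h ^+ 3 - C3
                                    + h * C2 * A + 2 * h * A * X)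
                   + (A ^+ 2 - h ^+ 2) * (4 * X ^+ 2 + A ^+ 2 + h ^+ 2 + 2 * A * C2
                                    + C2 ^+ 2 + 4 * A * X + 4 * C2 * X - h))).
  ring.
by rewrite mul2_polyC_half hA !subrr !mul0r addr0.
Qed.

End QuadraticLattice.

Section DividedDifferences.
Variables (R : numFieldType) (c2 c3 : R).
Variables (P Q : nat -> {poly R}) (beta gamma beta' gamma' : nat -> R).
Hypothesis hP : monic_orth_with P beta gamma.
Hypothesis hDD : forall n, DDrel c2 c3 (P n.+1) (n.+1%:R *: Q n).
Hypothesis hQ : ttrr Q beta' gamma'.

Local Notation mu := (mu c2 c3).
Local Notation d := (tshift (1/2) mu - tshift (-(1/2)) mu).

Lemma DDrel_Dmat k :
  d * iapply (Dmat R) (fun j => Q j \Po mu) k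
  = (P k \Po tshift (1/2) mu) - (P k \Po tshift (-(1/2)) mu).
Proof.
have [P0 _ _ _] := hP.
rewrite iapply_Dmat; case: k => [|k] /=.
  by rewrite P0 -polyC1 !comp_polyC subrr !mulr0.
have := hDD k; rewrite /DDrel -!tshift_comp => <-.
by rewrite comp_polyZ scaler_nat mulr_natl mulrC mulrnAl.
Qed.

Lemma Q0_eq1 : Q 0 = 1.
Proof.
have [P0 _ rec _] := hP.
have P1 : P 1 = 'X - (beta 0)%:P.
  have := rec 0; rewrite P0 /= scaler0 addr0 mulr1 -mul_polyC mulr1 => ->.
  by rewrite addrK.
apply: (comp_mu_inj (c2:=c2) (c3:=c3)).
apply: (mulfI (mu_shift_diff_neq0 c2 c3)).
have := DDrel_Dmat 1; rewrite iapply_Dmat [Defs.prev _ _]/= (mul1r (Q 0 \Po mu)) => ->.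
rewrite P1 -polyC1 !comp_polyB !comp_polyX !comp_polyC; ring.
Qed.

Lemma iapply_main_expr_Q n :
  iapply (main_expr c2 c3 (jacobi beta gamma) (jacobi beta' gamma'))
         (fun k => Q k \Po mu) n = 0.
Proof.
have [_ _ rec _] := hP.
have := main_expr_on_eigen c2 c3 n (ubanded_jacobi beta gamma)
  (ubanded_jacobi beta' gamma') (ttrr_comp mu hQ) (ttrr_comp _ rec)
  (ttrr_comp _ rec) DDrel_Dmat.
rewrite !main_symbol_shift_mu ?sqrrN // !mul0r subrr => /eqP.
by rewrite mulf_eq0 (negbTE (mu_shift_diff_neq0 c2 c3)) => /eqP.
Qed.

Lemma main_expr_eq0 i j :
  main_expr c2 c3 (jacobi beta gamma) (jacobi beta' gamma') i j = 0.
Proof.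
set E := main_expr _ _ _ _.
have [ij|ji] := ltnP (i + 2) j.
  by apply: ubanded_main_expr ij; exact: ubanded_jacobi.
have Qsize k : size (Q k) = k.+1 by case: (ttrr_monic Q0_eq1 hQ k).
apply: (graded_sum_eq0 Qsize (N := i.+3)); last lia.
apply: (comp_mu_inj (c2:=c2) (c3:=c3)).
rewrite comp_poly0 -[RHS](iapply_main_expr_Q i) raddf_sum.
by apply: eq_bigr => k _; rewrite /= comp_polyZ mul_polyC.
Qed.

End DividedDifferences.

Unset Implicit Arguments.

Theorem theorem3p3 (R : numFieldType) (c2 c3 : R)
    (P : nat -> {poly R}) (beta gamma : nat -> R)
    (Q : nat -> {poly R}) (beta' gamma' : nat -> R) :
  monic_orth_with P beta gamma ->
  (forall n, DDrel c2 c3 (P n.+1) (n.+1%:R *: Q n)) ->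
  ttrr Q beta' gamma' ->
  (classical c2 c3 P <->
   forall i j, main_expr c2 c3 (jacobi beta gamma) (jacobi beta' gamma') i j = 0).
Proof.
move=> hP hDD hQ; split=> [_|E0]; first exact: main_expr_eq0 hP hDD hQ.
have Q0 := Q0_eq1 hP hDD; have [_ _ _ gamma_neq0] := hP.
exists Q; split=> //; exists beta', gamma'; split=> //; first exact: ttrr_monic Q0 hQ.
case=> [//|k] _; apply/eqP => gamma'0.
have := E0 k.+3 k; rewrite main_expr_subdiag gamma'0 !mulr0 subr0 addr0 => /eqP.
by rewrite !mulf_eq0 pnatr_eq0 (negbTE (gamma_neq0 k.+3 _)) ?(negbTE (gamma_neq0 k.+2 _)).
Qed.
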